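(* Let $\alpha,\beta\in\mathbb{C}$ be not both zero, $\ell(x,y)=\alpha x+\beta y$, $H(x,y)=\tfrac12 a_1x^2+a_2xy+\tfrac12 a_3y^2+a_4x+a_5y$, and let $\Phi_f$ be the Kahan map (step $1$) of the vector field $f=\ell\,(\partial H/\partial y,\,-\partial H/\partial x)^T$. Let $\gamma_1=a_2^2-a_1a_3$, $c=\gamma_1^{-1/2}$, $\gamma_2=a_3a_4^2+a_1a_5^2-2a_2a_4a_5$, $C=H-\tfrac12\gamma_2\ell^2$, $D=1-\gamma_1\ell^2$, and consider the pencil of conics $C(x,y)-\lambda D(x,y)=0$, with $C(x,y)=0$ nonsingular. Then, generically, the map $\Phi_f$, considered as a birational map $\mathbb{C}P^2\dashrightarrow\mathbb{C}P^2$, has three singular points $B_1,B_3,B_0$, lying on the lines $\ell(x,y)=-c$, $\ell(x,y)=c$ and $\ell(x,y)=0$ respectively; and $\Phi_f^{-1}$ has three singular points $B_2,B_4,B_5$, lying on the lines $\ell(x,y)=-c$, $\ell(x,y)=c$ and $\ell(x,y)=0$ respectively. The points $B_1,B_2,B_3,B_4$ are the base points of the pencil, and $$B_0=\tfrac12(B_2+B_4),\qquad B_5=\tfrac12(B_1+B_3).$$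
   Context: Kahan discretization: for a quadratic vector field $f(x)=Q(x)+Bx+c$ on $\mathbb{C}^n$, the Kahan map $\widetilde x=\Phi_f(x)$ (step $1$) is defined by $\frac{\widetilde x-x}{2}=Q(x,\widetilde x)+\frac12B(x+\widetilde x)+c$ with $Q(x,\widetilde x)=\frac12(Q(x+\widetilde x)-Q(x)-Q(\widetilde x))$; equivalently $\Phi_f(x)=x+2(I-f'(x))^{-1}f(x)$. It is birational with $\Phi_f^{-1}=\Phi_{-f}$. In the planar case $\Phi_f=(R/T,S/T)$ with polynomials $R,S,T$ of degree 2; singular points of the birational map are its points of indeterminacy, i.e. the common zeros of the components of its homogenized representation (in the affine part, the common zeros of $R,S,T$). Base points of a pencil of conics are the points common to all its conics. *)

(* The field of complex numbers is modelled as R[i]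
   (mathcomp-real-closed's [complex R]) for an arbitrary [R : realType]. *)
From HB Require Import structures.
From mathcomp Require Import all_boot all_algebra.
From mathcomp Require Export reals complex.
From mathcomp Require Export mpoly.

Set Implicit Arguments.
Unset Strict Implicit.
Unset Printing Implicit Defensive.

Import GRing.Theory.
Local Open Scope ring_scope.

Section Kahan.
Variable C : fieldType.

Definition vadd (u v : C * C) : C * C := (u.1 + v.1, u.2 + v.2).
Definition vscale (a : C) (u : C * C) : C * C := (a * u.1, a * u.2).

(* A planar quadratic vector field  f(x) = Q(x) + B x + c  is given by its
   quadratic part Q (a quadratic form C^2 -> C^2), its linear part B and its
   constant part c. *)

Definition polar (Q : C * C -> C * C) (u v : C * C) : C * C :=
  vscale (2^-1) (vadd (Q (vadd u v)) (vscale (-1) (vadd (Q u) (Q v)))).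

(* The Kahan equation (x~ - x)/2 = Q(x,x~) + 1/2 B(x + x~) + c is the linear
   system  L(x) x~ = r(x)  with  L(x) w = w - 2 Q(x,w) - B w  and
   r(x) = x + B x + 2 c.  By Cramer's rule  Phi_f = (R/T, S/T)  with
   T = det L(x),  (R,S) = adj L(x) r(x), all of degree 2.
   Below: the homogenised (degree 2, homogenising variable z) versions. *)
Definition kahan_Lh (Q B : C * C -> C * C) (x y z : C) (w : C * C) : C * C :=
  vadd (vscale z w)
       (vscale (-1) (vadd (vscale 2 (polar Q (x, y) w)) (vscale z (B w)))).

Definition kahan_rh (B : C * C -> C * C) (c : C * C) (x y z : C) : C * C :=
  vadd (x, y) (vadd (B (x, y)) (vscale (2 * z) c)).

Definition kahan_hom (Q B : C * C -> C * C) (c : C * C) (x y z : C)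
  : C * C * C :=
  let L1 := kahan_Lh Q B x y z (1, 0) in
  let L2 := kahan_Lh Q B x y z (0, 1) in
  let r := kahan_rh B c x y z in
  (L2.2 * r.1 - L2.1 * r.2,
   - L1.2 * r.1 + L1.1 * r.2,
   L1.1 * L2.2 - L2.1 * L1.2).

Definition kahan_singular (Q B : C * C -> C * C) (c : C * C) (x y z : C)
  : Prop :=
  let v := kahan_hom Q B c x y z in v.1.1 = 0 /\ v.1.2 = 0 /\ v.2 = 0.

Definition proj_is (p : C * C) (x y z : C) : Prop :=
  exists t : C, t != 0 /\ x = t * p.1 /\ y = t * p.2 /\ z = t.

Variables (al be a1 a2 a3 a4 a5 : C).

Definition ell (p : C * C) : C := al * p.1 + be * p.2.

Definition Ham (p : C * C) : C :=
  2^-1 * a1 * p.1 ^+ 2 + a2 * p.1 * p.2 + 2^-1 * a3 * p.2 ^+ 2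
  + a4 * p.1 + a5 * p.2.

(* f = ell * (dH/dy, -dH/dx) = Q(x) + B x + 0, with
   dH/dx = a1 x + a2 y + a4,  dH/dy = a2 x + a3 y + a5 *)
Definition fQ (p : C * C) : C * C :=
  (ell p * (a2 * p.1 + a3 * p.2), - (ell p * (a1 * p.1 + a2 * p.2))).
Definition fB (p : C * C) : C * C := (ell p * a5, - (ell p * a4)).
Definition fc : C * C := (0, 0).

Definition fvec (p : C * C) : C * C := vadd (fQ p) (vadd (fB p) fc).

Definition mfQ (p : C * C) : C * C := vscale (-1) (fQ p).
Definition mfB (p : C * C) : C * C := vscale (-1) (fB p).
Definition mfc : C * C := vscale (-1) fc.

Definition gamma1 : C := a2 ^+ 2 - a1 * a3.
Definition gamma2 : C := a3 * a4 ^+ 2 + a1 * a5 ^+ 2 - 2 * a2 * a4 * a5.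

Definition conC (p : C * C) : C := Ham p - 2^-1 * gamma2 * ell p ^+ 2.
Definition conD (p : C * C) : C := 1 - gamma1 * ell p ^+ 2.

Definition conCh (x y z : C) : C :=
  2^-1 * a1 * x ^+ 2 + a2 * x * y + 2^-1 * a3 * y ^+ 2
  + a4 * x * z + a5 * y * z - 2^-1 * gamma2 * ell (x, y) ^+ 2.
Definition conDh (x y z : C) : C := z ^+ 2 - gamma1 * ell (x, y) ^+ 2.

Definition conCh_x (x y z : C) : C :=
  a1 * x + a2 * y + a4 * z - gamma2 * al * ell (x, y).
Definition conCh_y (x y z : C) : C :=
  a2 * x + a3 * y + a5 * z - gamma2 * be * ell (x, y).
Definition conCh_z (x y z : C) : C := a4 * x + a5 * y.

Definition conC_nonsingular : Prop :=
  forall x y z : C, (x, y, z) != (0, 0, 0) ->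
    ~ [/\ conCh x y z = 0, conCh_x x y z = 0, conCh_y x y z = 0
        & conCh_z x y z = 0].

Definition params : 'I_7 -> C :=
  fun i => nth 0 [:: al; be; a1; a2; a3; a4; a5] i.

End Kahan.

(* In the coordinates u = al x + be y and m = nu1 x + nu2 y (the linear part
   of al dH/dy - be dH/dx), which are independent when
   delta = al nu2 - be nu1 <> 0, the homogenised Kahan map and the two conics
   of the pencil become short polynomials in (u, m, z) whose common zeros can
   be found by hand: since c^2 gamma1 = 1 the conic D splits into the lines
   u = c z and u = - c z, on each of which C is a difference of two squares.
   The field -f is the field built from -H, so the singular points of
   Phi_(-f) are those of Phi_f for the negated coefficients a1, ..., a5.
   The genericity polynomial is delta (theta^2 - gamma1); theta^2 <> gamma1
   keeps the four base points apart. *)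

From HB Require Import structures.
From mathcomp Require Import all_boot all_algebra.
From mathcomp Require Import reals complex.
From mathcomp Require Import mpoly.
From mathcomp Require Import ring.

Set Implicit Arguments.
Unset Strict Implicit.
Unset Printing Implicit Defensive.

Import GRing.Theory Num.Theory.
Local Open Scope ring_scope.

Definition on_ray {F : fieldType} (u0 m0 u m z : F) : Prop :=
  [/\ z != 0, u = u0 * z & m = m0 * z].

Section LinearCoordinates.
Variables (F : fieldType) (al be r1 r2 : F).
Hypothesis det_neq0 : al * r2 - be * r1 != 0.

Definition coord_point (u m : F) : F * F :=
  ((u * r2 - be * m) / (al * r2 - be * r1),
   (al * m - r1 * u) / (al * r2 - be * r1)).

Lemma ell_coord_point u m : ell al be (coord_point u m) = u.
Proof. by rewrite /ell /=; field. Qed.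

Lemma ell_coord_point2 u m : ell r1 r2 (coord_point u m) = m.
Proof. by rewrite /ell /=; field. Qed.

Lemma coord_pointE p : coord_point (ell al be p) (ell r1 r2 p) = p.
Proof. by case: p => x y; rewrite /coord_point /ell /=; congr (_, _); field. Qed.

Lemma coord_point_inj u m u' m' :
  coord_point u m = coord_point u' m' -> u = u' /\ m = m'.
Proof.
move=> e; split; first by rewrite -(ell_coord_point u m) e ell_coord_point.
by rewrite -(ell_coord_point2 u m) e ell_coord_point2.
Qed.

Lemma ell2_inj p p' :
  ell al be p = ell al be p' -> ell r1 r2 p = ell r1 r2 p' -> p = p'.
Proof. by move=> e1 e2; rewrite -(coord_pointE p) -(coord_pointE p') e1 e2. Qed.

Lemma ell2_neq0 (x y z : F) : (x, y, z) != (0, 0, 0) ->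
  (ell al be (x, y), ell r1 r2 (x, y), z) != (0, 0, 0).
Proof.
apply: contraNneq => -[e1 e2 ->].
suff -> : (x, y) = (0, 0) by [].
by apply: ell2_inj; rewrite ?e1 ?e2 /ell /= !mulr0 addr0.
Qed.

Lemma proj_is_on_ray (p : F * F) (x y z : F) :
  proj_is p x y z
  <-> on_ray (ell al be p) (ell r1 r2 p) (ell al be (x, y)) (ell r1 r2 (x, y)) z.
Proof.
rewrite /on_ray /ell /=.
split=> [[t [t0 [-> [-> ->]]]] | [z0 hu hm]]; first by split=> //; ring.
exists z; have [-> ->] : (x, y) = (z * p.1, z * p.2).
  by apply: ell2_inj; rewrite /ell /= ?hu ?hm; ring.
by [].
Qed.

Lemma vscale_vadd_coord_point a u m u' m' :
  vscale a (vadd (coord_point u m) (coord_point u' m'))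
  = coord_point (a * (u + u')) (a * (m + m')).
Proof. by rewrite /coord_point /vscale /vadd /=; congr (_, _); ring. Qed.

End LinearCoordinates.

Section NormalForm.
Variables (F : fieldType) (k q g : F).
Hypothesis two_neq0 : (2 : F) != 0.

Definition kahan_nf (u m z : F) : F * F * F :=
  (u * (z * (1 + k) + m + u * q),
   (z * (1 - k) - m) * (m + u * q) + 2 * g * u ^+ 2 * (1 + k)
     + z * u * (1 + k) * q,
   z ^+ 2 * (1 - k) - z * m - z * u * q - 2 * g * u ^+ 2).

Definition pencil_nf (u m z : F) : F * F :=
  (m ^+ 2 - g * u ^+ 2 + 2 * z * (m * k - u * q) - (q ^+ 2 - g * k ^+ 2) * u ^+ 2,
   z ^+ 2 - g * u ^+ 2).

Section Root.
Variable c : F.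
Hypothesis c2g : c ^+ 2 * g = 1.

Lemma c_neq0 : c != 0.
Proof. by apply: contra_eq_neq c2g => ->; rewrite expr0n mul0r eq_sym oner_neq0. Qed.

Lemma g_neq0 : g != 0.
Proof. by apply: contra_eq_neq c2g => ->; rewrite mulr0 eq_sym oner_neq0. Qed.

Lemma g_inv_sqr : g = c ^-2.
Proof. by apply: (mulfI (expf_neq0 2 c_neq0)); rewrite c2g divff ?expf_neq0 ?c_neq0. Qed.

Lemma conic_eq0 u z :
  (z ^+ 2 - g * u ^+ 2 == 0) = (u == c * z) || (u == - (c * z)).
Proof.
have -> : z ^+ 2 - g * u ^+ 2 = g * ((c * z) ^+ 2 - u ^+ 2).
  by rewrite g_inv_sqr; field; apply: c_neq0.
by rewrite mulf_eq0 (negbTE g_neq0) subr_eq0 eq_sym eqf_sqr.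
Qed.

Lemma kahan_nf_eq0 u m z : (u, m, z) != (0, 0, 0) ->
  kahan_nf u m z = (0, 0, 0) <->
  [\/ on_ray (- c) (- (1 + k - c * q)) u m z,
      on_ray c (- (1 + k + c * q)) u m z
    | on_ray 0 (1 - k) u m z].
Proof.
move=> nz0; split=> [[E1 E2 E3] | ]; last first.
  have c0 := c_neq0.
  by case=> -[_ -> ->]; rewrite /kahan_nf g_inv_sqr; congr (_, _, _); field.
have [u0 | u_neq0] := eqVneq u 0.
  have E3' : z * (z * (1 - k) - m) = 0 by rewrite -E3 u0; ring.
  have E2' : (z * (1 - k) - m) * m = 0 by rewrite -E2 u0; ring.
  have [w0 | w_neq0] := eqVneq (z * (1 - k) - m) 0.
    have m_def : m = (1 - k) * z by apply/eqP; rewrite eq_sym mulrC -subr_eq0 w0.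
    constructor 3; split=> //; last by rewrite u0 mul0r.
    by apply: contraNneq nz0 => z0; rewrite u0 m_def z0 mulr0.
  have z0 : z = 0 by apply/eqP; move/eqP: E3'; rewrite mulf_eq0 (negbTE w_neq0) orbF.
  have m0 : m = 0 by apply/eqP; move/eqP: E2'; rewrite mulf_eq0 (negbTE w_neq0).
  by rewrite u0 m0 z0 eqxx in nz0.
(* Off [u = 0] the first equation gives [m], and then the third one reads
   [2 (z^2 - g u^2) = 0]. *)
have E1' : z * (1 + k) + m + u * q = 0.
  by apply/eqP; move/eqP: E1; rewrite mulf_eq0 (negbTE u_neq0).
have m_def : m = - (1 + k) * z - u * q.
  by apply/eqP; rewrite -subr_eq0 -E1'; apply/eqP; ring.
have E3' : 2 * (z ^+ 2 - g * u ^+ 2) = 0 by rewrite -E3 m_def; ring.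
move/eqP: E3'; rewrite mulf_eq0 (negbTE two_neq0) /= conic_eq0 => /orP [] /eqP u_def.
  have z_neq0 : z != 0 by apply: contraNneq u_neq0 => z0; rewrite u_def z0 mulr0.
  constructor 2; split=> //; rewrite m_def u_def; ring.
have z_neq0 : z != 0 by apply: contraNneq u_neq0 => z0; rewrite u_def z0 mulr0 oppr0.
constructor 1; split=> //; rewrite ?m_def u_def; ring.
Qed.

Lemma pencil_nf_line m z :
  (pencil_nf (c * z) m z).1 = (m + k * z) ^+ 2 - ((1 + c * q) * z) ^+ 2.
Proof. by rewrite /pencil_nf g_inv_sqr /=; field; apply: c_neq0. Qed.

End Root.

Lemma pencil_nf_eq0 c u m z : c ^+ 2 * g = 1 -> (u, m, z) != (0, 0, 0) ->
  pencil_nf u m z = (0, 0) <->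
  [\/ on_ray (- c) (- (1 + k - c * q)) u m z,
      on_ray (- c) (1 - k - c * q) u m z,
      on_ray c (- (1 + k + c * q)) u m z
    | on_ray c (1 - k + c * q) u m z].
Proof.
move=> c2g nz0; have c0 := c_neq0 c2g.
split=> [E | ]; last first.
  by case=> -[_ -> ->]; rewrite /pencil_nf (g_inv_sqr c2g); congr (_, _); field.
have EC : (pencil_nf u m z).1 = 0 := congr1 fst E.
have ED : z ^+ 2 - g * u ^+ 2 = 0 := congr1 snd E.
have z_neq0 : z != 0.
  apply: contraNneq nz0 => z0.
  have u0 : u = 0 by move/eqP: ED; rewrite (conic_eq0 c2g) z0 mulr0 oppr0 orbb => /eqP.
  have : m ^+ 2 = 0 by rewrite -EC u0 z0 /pencil_nf /=; ring.
  by move/eqP; rewrite expf_eq0 /= u0 z0 => /eqP ->.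
have [u_def | u_def] : u = c * z \/ u = - c * z.
- by move/eqP: ED; rewrite (conic_eq0 c2g) mulNr => /orP [] /eqP; [left | right].
- move: EC; rewrite u_def (pencil_nf_line c2g) => /eqP; rewrite subr_eq0 eqf_sqr.
  case/orP=> /eqP m_def; [constructor 4 | constructor 3];
    by split=> //; apply: (addIr (k * z)); rewrite m_def; ring.
- have c2g' : (- c) ^+ 2 * g = 1 by rewrite sqrrN.
  move: EC; rewrite u_def (pencil_nf_line c2g') => /eqP; rewrite subr_eq0 eqf_sqr.
  case/orP=> /eqP m_def; [constructor 2 | constructor 1];
    by split=> //; apply: (addIr (k * z)); rewrite m_def; ring.
Qed.

End NormalForm.

Lemma or3_congr (P1 P2 P3 Q1 Q2 Q3 : Prop) :
  (P1 <-> Q1) -> (P2 <-> Q2) -> (P3 <-> Q3) ->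
  [\/ P1, P2 | P3] <-> [\/ Q1, Q2 | Q3].
Proof.
by move=> [? ?] [? ?] [? ?]; split=> -[] ?;
  [apply: Or31 | apply: Or32 | apply: Or33
  |apply: Or31 | apply: Or32 | apply: Or33]; auto.
Qed.

Lemma or4_congr (P1 P2 P3 P4 Q1 Q2 Q3 Q4 : Prop) :
  (P1 <-> Q1) -> (P2 <-> Q2) -> (P3 <-> Q3) -> (P4 <-> Q4) ->
  [\/ P1, P2, P3 | P4] <-> [\/ Q1, Q2, Q3 | Q4].
Proof.
by move=> [? ?] [? ?] [? ?] [? ?]; split=> -[] ?;
  [apply: Or41 | apply: Or42 | apply: Or43 | apply: Or44
  |apply: Or41 | apply: Or42 | apply: Or43 | apply: Or44]; auto.
Qed.

Section Coefficients.
Variables (R : comRingType) (al be a1 a2 a3 a4 a5 : R).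

Definition nu1 := al * a2 - be * a1.
Definition nu2 := al * a3 - be * a2.
Definition kappa := al * a5 - be * a4.
Definition theta := al * (a2 * a5 - a3 * a4) + be * (a2 * a4 - a1 * a5).
Definition delta := al * nu2 - be * nu1.
Definition genericity := delta * (theta ^+ 2 - (a2 ^+ 2 - a1 * a3)).

End Coefficients.

Section KahanCoordinates.
Variables (F : fieldType) (al be a1 a2 a3 a4 a5 : F).
Hypothesis two_neq0 : (2 : F) != 0.

Let r1 := nu1 al be a1 a2.
Let r2 := nu2 al be a2 a3.
Let k := kappa al be a4 a5.
Let q := theta al be a1 a2 a3 a4 a5.

Lemma polar_fQ p w :
  vscale 2 (polar (fQ al be a1 a2 a3) p w) =
  (ell al be p * (a2 * w.1 + a3 * w.2) + ell al be w * (a2 * p.1 + a3 * p.2),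
   - (ell al be p * (a1 * w.1 + a2 * w.2) + ell al be w * (a1 * p.1 + a2 * p.2))).
Proof. by rewrite /polar /vadd /vscale /fQ /ell /=; congr (_, _); field. Qed.

Lemma kahan_hom_nf x y z :
  let v := kahan_hom (fQ al be a1 a2 a3) (fB al be a4 a5) (fc F) x y z in
  (ell al be v.1, ell r1 r2 v.1, v.2)
  = kahan_nf k q (gamma1 a1 a2 a3) (ell al be (x, y)) (ell r1 r2 (x, y)) z.
Proof.
rewrite /kahan_hom /kahan_Lh !polar_fQ /kahan_rh /vadd /vscale /fB /fc /ell.
rewrite /kahan_nf /r1 /r2 /k /q /nu1 /nu2 /kappa /theta /gamma1 /=.
by congr (_, _, _); ring.
Qed.

Lemma conic_pencil_nf x y z :
  (2 * delta al be a1 a2 a3 * conCh al be a1 a2 a3 a4 a5 x y z,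
   conDh al be a1 a2 a3 x y z)
  = pencil_nf k q (gamma1 a1 a2 a3) (ell al be (x, y)) (ell r1 r2 (x, y)) z.
Proof.
rewrite /conCh /conDh /gamma2 /pencil_nf /delta /r1 /r2 /k /q.
rewrite /nu1 /nu2 /kappa /theta /gamma1 /ell /=.
by congr (_, _); field.
Qed.

End KahanCoordinates.

Lemma eq_kahan_hom (F : fieldType) (Q Q' B B' : F * F -> F * F) (c : F * F)
    (x y z : F) :
  Q =1 Q' -> B =1 B' -> kahan_hom Q B c x y z = kahan_hom Q' B' c x y z.
Proof. by move=> eQ eB; rewrite /kahan_hom /kahan_Lh /kahan_rh /polar !eQ !eB. Qed.

Lemma kahan_hom_opp (F : fieldType) (al be a1 a2 a3 a4 a5 x y z : F) :
  kahan_hom (mfQ al be a1 a2 a3) (mfB al be a4 a5) (mfc F) x y z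
  = kahan_hom (fQ al be (- a1) (- a2) (- a3)) (fB al be (- a4) (- a5)) (fc F) x y z.
Proof.
have -> : mfc F = fc F by rewrite /mfc /fc /vscale mulr0.
apply: eq_kahan_hom => -[p1 p2];
  by rewrite /mfQ /fQ /mfB /fB /vscale /ell /=; congr (_, _); ring.
Qed.

Definition kpoint (F : fieldType) (al be a1 a2 a3 u m : F) : F * F :=
  coord_point al be (nu1 al be a1 a2) (nu2 al be a2 a3) u m.

Lemma kpoint_opp (F : fieldType) (al be a1 a2 a3 u m : F) :
  kpoint al be (- a1) (- a2) (- a3) u m = kpoint al be a1 a2 a3 u (- m).
Proof.
rewrite /kpoint /coord_point /nu1 /nu2 /=.
by congr (_, _); rewrite -[LHS]mulrNN -invrN; congr (_ / _); ring.
Qed.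

Section BasePoints.
Variables (F : fieldType) (al be a1 a2 a3 a4 a5 c : F).
Let k := kappa al be a4 a5.
Let q := theta al be a1 a2 a3 a4 a5.
Let pt := kpoint al be a1 a2 a3.

Definition B0 := pt 0 (1 - k).
Definition B1 := pt (- c) (- (1 + k - c * q)).
Definition B2 := pt (- c) (1 - k - c * q).
Definition B3 := pt c (- (1 + k + c * q)).
Definition B4 := pt c (1 - k + c * q).
Definition B5 := pt 0 (- (1 + k)).

End BasePoints.

Section KahanMap.
Variables (F : fieldType) (al be a1 a2 a3 a4 a5 c : F).
Hypotheses (two_neq0 : (2 : F) != 0) (c2g : c ^+ 2 * gamma1 a1 a2 a3 = 1)
  (delta_neq0 : delta al be a1 a2 a3 != 0).

Let k := kappa al be a4 a5.
Let q := theta al be a1 a2 a3 a4 a5.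
Let u x y := ell al be (x, y).
Let m x y := ell (nu1 al be a1 a2) (nu2 al be a2 a3) (x, y).

Lemma proj_is_kpoint u0 m0 x y z :
  proj_is (kpoint al be a1 a2 a3 u0 m0) x y z <-> on_ray u0 m0 (u x y) (m x y) z.
Proof.
have := proj_is_on_ray delta_neq0 (kpoint al be a1 a2 a3 u0 m0) x y z.
by rewrite ell_coord_point // ell_coord_point2.
Qed.

Lemma kahan_singular_nf x y z :
  kahan_singular (fQ al be a1 a2 a3) (fB al be a4 a5) (fc F) x y z
  <-> kahan_nf k q (gamma1 a1 a2 a3) (u x y) (m x y) z = (0, 0, 0).
Proof.
rewrite /kahan_singular -kahan_hom_nf //.
case: (kahan_hom _ _ _ x y z) => -[R S] T /=.
split=> [[-> [-> ->]] | [eR eS ->]]; first by rewrite /ell /= !mulr0 addr0.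
suff [-> ->] : (R, S) = (0, 0) by [].
by apply: (ell2_inj delta_neq0); rewrite ?eR ?eS /ell /= !mulr0 addr0.
Qed.

Lemma kahan_singular_points x y z : (x, y, z) != (0, 0, 0) ->
  kahan_singular (fQ al be a1 a2 a3) (fB al be a4 a5) (fc F) x y z
  <-> [\/ proj_is (B1 al be a1 a2 a3 a4 a5 c) x y z,
          proj_is (B3 al be a1 a2 a3 a4 a5 c) x y z
        | proj_is (B0 al be a1 a2 a3 a4 a5) x y z].
Proof.
move=> nz0; rewrite kahan_singular_nf (kahan_nf_eq0 _ _ two_neq0 c2g).
  by apply: or3_congr; rewrite proj_is_kpoint.
exact: ell2_neq0.
Qed.

Lemma conics_eq0_pencil_nf x y z :
  conCh al be a1 a2 a3 a4 a5 x y z = 0 /\ conDh al be a1 a2 a3 x y z = 0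
  <-> pencil_nf k q (gamma1 a1 a2 a3) (u x y) (m x y) z = (0, 0).
Proof.
rewrite -conic_pencil_nf //; split=> [[-> ->] | [/eqP eC ->]]; first by rewrite mulr0.
by move: eC; rewrite !mulf_eq0 (negbTE two_neq0) (negbTE delta_neq0) => /eqP.
Qed.

Lemma pencil_base_points x y z : (x, y, z) != (0, 0, 0) ->
  conCh al be a1 a2 a3 a4 a5 x y z = 0 /\ conDh al be a1 a2 a3 x y z = 0
  <-> [\/ proj_is (B1 al be a1 a2 a3 a4 a5 c) x y z,
          proj_is (B2 al be a1 a2 a3 a4 a5 c) x y z,
          proj_is (B3 al be a1 a2 a3 a4 a5 c) x y z
        | proj_is (B4 al be a1 a2 a3 a4 a5 c) x y z].
Proof.
move=> nz0; rewrite conics_eq0_pencil_nf.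
rewrite (pencil_nf_eq0 _ _ c2g (ell2_neq0 delta_neq0 nz0)).
by apply: or4_congr; rewrite proj_is_kpoint.
Qed.

Lemma ell_kpoint u0 m0 : ell al be (kpoint al be a1 a2 a3 u0 m0) = u0.
Proof. exact: ell_coord_point. Qed.

Lemma base_points_uniq : theta al be a1 a2 a3 a4 a5 ^+ 2 - gamma1 a1 a2 a3 != 0 ->
  uniq [:: B1 al be a1 a2 a3 a4 a5 c; B2 al be a1 a2 a3 a4 a5 c;
           B3 al be a1 a2 a3 a4 a5 c; B4 al be a1 a2 a3 a4 a5 c].
Proof.
move=> q2g.
have cq2 : (c * q) ^+ 2 != 1.
  rewrite -subr_eq0 (_ : _ - 1 = c ^+ 2 * (q ^+ 2 - gamma1 a1 a2 a3)).
    by rewrite mulf_neq0 ?expf_neq0 ?(c_neq0 c2g).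
  by rewrite -c2g; ring.
have cNc : - c != c.
  rewrite -subr_eq0 (_ : - c - c = - (2 * c)); last by ring.
  by rewrite oppr_eq0 mulf_neq0 ?(c_neq0 c2g).
move: cq2; rewrite sqrf_eq1 negb_or => /andP [cq_neq1 cq_neqN1].
rewrite /= !inE !negb_or /B1 /B2 /B3 /B4 /kpoint.
repeat (apply/andP; split) => //.
all: apply/negP => /eqP /(coord_point_inj delta_neq0) [eu em].
all: try by rewrite eu eqxx in cNc.
- apply: (negP cq_neq1).
  have : 2 * (1 - c * q) = (1 - k - c * q) - (- (1 + k - c * q)) by ring.
  by rewrite em subrr => /eqP; rewrite mulf_eq0 (negbTE two_neq0) subr_eq0 eq_sym.
- apply: (negP cq_neqN1).
  have : 2 * (c * q + 1) = (1 - k + c * q) - (- (1 + k + c * q)) by ring.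
  by rewrite em subrr => /eqP; rewrite mulf_eq0 (negbTE two_neq0) addr_eq0.
Qed.

Lemma base_points_midpoints :
  B0 al be a1 a2 a3 a4 a5
    = vscale 2^-1 (vadd (B2 al be a1 a2 a3 a4 a5 c) (B4 al be a1 a2 a3 a4 a5 c))
  /\ B5 al be a1 a2 a3 a4 a5
    = vscale 2^-1 (vadd (B1 al be a1 a2 a3 a4 a5 c) (B3 al be a1 a2 a3 a4 a5 c)).
Proof.
by rewrite /B0 /B1 /B2 /B3 /B4 /B5 /kpoint !vscale_vadd_coord_point;
  split; congr coord_point; field.
Qed.

End KahanMap.

Lemma base_points_opp (F : fieldType) (al be a1 a2 a3 a4 a5 c : F) :
  [/\ B1 al be (- a1) (- a2) (- a3) (- a4) (- a5) c = B2 al be a1 a2 a3 a4 a5 c,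
      B3 al be (- a1) (- a2) (- a3) (- a4) (- a5) c = B4 al be a1 a2 a3 a4 a5 c
    & B0 al be (- a1) (- a2) (- a3) (- a4) (- a5) = B5 al be a1 a2 a3 a4 a5].
Proof.
by rewrite /B0 /B1 /B2 /B3 /B4 /B5 !kpoint_opp /kappa /theta;
  split; congr kpoint; ring.
Qed.

Lemma inverse_kahan_singular_points (F : fieldType) (al be a1 a2 a3 a4 a5 c x y z : F) :
  (2 : F) != 0 -> c ^+ 2 * gamma1 a1 a2 a3 = 1 -> delta al be a1 a2 a3 != 0 ->
  (x, y, z) != (0, 0, 0) ->
  kahan_singular (mfQ al be a1 a2 a3) (mfB al be a4 a5) (mfc F) x y z
  <-> [\/ proj_is (B2 al be a1 a2 a3 a4 a5 c) x y z,
          proj_is (B4 al be a1 a2 a3 a4 a5 c) x y z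
        | proj_is (B5 al be a1 a2 a3 a4 a5) x y z].
Proof.
move=> two_neq0 c2g delta_neq0 nz0.
have [<- <- <-] := base_points_opp al be a1 a2 a3 a4 a5 c.
rewrite /kahan_singular kahan_hom_opp.
apply: kahan_singular_points => //; first by rewrite -c2g /gamma1; congr (_ * _); ring.
rewrite (_ : delta _ _ _ _ _ = - delta al be a1 a2 a3) ?oppr_eq0 //.
by rewrite /delta /nu1 /nu2; ring.
Qed.

Lemma rmorph_genericity (R S : comRingType) (f : {rmorphism R -> S})
    (al be a1 a2 a3 a4 a5 : R) :
  f (genericity al be a1 a2 a3 a4 a5)
  = genericity (f al) (f be) (f a1) (f a2) (f a3) (f a4) (f a5).
Proof.
by rewrite /genericity /delta /nu1 /nu2 /theta !(rmorphB, rmorphD, rmorphM, rmorphXn).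
Qed.

Section Genericity.
Variable R : realType.

Definition genericity_poly : {mpoly R[i][7]} :=
  let X i : {mpoly R[i][7]} := 'X_(inord i) in
  genericity (X 0%N) (X 1%N) (X 2%N) (X 3%N) (X 4%N) (X 5%N) (X 6%N).

Lemma meval_genericity_poly (al be a1 a2 a3 a4 a5 : R[i]) :
  genericity_poly.@[params al be a1 a2 a3 a4 a5]
  = genericity al be a1 a2 a3 a4 a5.
Proof.
by rewrite rmorph_genericity; congr genericity;
  rewrite -[LHS]/(meval _ _) mevalXU /params inordK.
Qed.

Lemma genericity_poly_neq0 : genericity_poly != 0.
Proof.
apply/eqP => P0; have := meval_genericity_poly 1 0 (-1) 0 1 0 0.
have -> : genericity 1 0 (-1) 0 1 0 0 = -1 :> R[i].
  by rewrite /genericity /delta /nu1 /nu2 /theta; ring.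
by rewrite P0 meval0 => /eqP; rewrite eq_sym oppr_eq0 oner_eq0.
Qed.
End Genericity.

Theorem theorem3 (R : realType) :
  exists P : {mpoly R[i] [7]}, P != 0 /\
  forall al be a1 a2 a3 a4 a5 c : R[i],
    (al != 0 \/ be != 0) ->
    conC_nonsingular al be a1 a2 a3 a4 a5 ->
    c ^+ 2 * gamma1 a1 a2 a3 = 1 ->
    P.@[params al be a1 a2 a3 a4 a5] != 0 ->
    exists B0 B1 B2 B3 B4 B5 : R[i] * R[i],
      [/\ ell al be B1 = - c, ell al be B3 = c & ell al be B0 = 0]
      /\ [/\ ell al be B2 = - c, ell al be B4 = c & ell al be B5 = 0]
      /\ (forall x y z : R[i], (x, y, z) != (0, 0, 0) ->
            (kahan_singular (fQ al be a1 a2 a3) (fB al be a4 a5) (fc _) x y z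
             <-> [\/ proj_is B1 x y z, proj_is B3 x y z | proj_is B0 x y z]))
      /\ (forall x y z : R[i], (x, y, z) != (0, 0, 0) ->
            (kahan_singular (mfQ al be a1 a2 a3) (mfB al be a4 a5) (mfc _)
               x y z
             <-> [\/ proj_is B2 x y z, proj_is B4 x y z | proj_is B5 x y z]))
      /\ (forall x y z : R[i], (x, y, z) != (0, 0, 0) ->
            (conCh al be a1 a2 a3 a4 a5 x y z = 0 /\
             conDh al be a1 a2 a3 x y z = 0
             <-> [\/ proj_is B1 x y z, proj_is B2 x y z,
                     proj_is B3 x y z | proj_is B4 x y z]))
      /\ uniq [:: B1; B2; B3; B4]
      /\ B0 = vscale (2^-1) (vadd B2 B4)
      /\ B5 = vscale (2^-1) (vadd B1 B3).
Proof.
exists (genericity_poly R); split; first exact: genericity_poly_neq0.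
move=> al be a1 a2 a3 a4 a5 c _ _ c2g.
rewrite meval_genericity_poly mulf_eq0 negb_or => /andP [delta_neq0 q2g].
have two_neq0 : (2 : R[i]) != 0 by rewrite pnatr_eq0.
have [mid0 mid5] := @base_points_midpoints _ al be a1 a2 a3 a4 a5 c two_neq0.
exists (B0 al be a1 a2 a3 a4 a5), (B1 al be a1 a2 a3 a4 a5 c),
  (B2 al be a1 a2 a3 a4 a5 c), (B3 al be a1 a2 a3 a4 a5 c),
  (B4 al be a1 a2 a3 a4 a5 c), (B5 al be a1 a2 a3 a4 a5).
do 2 (split; first by split; rewrite ell_kpoint).
split; first by move=> x y z; exact: kahan_singular_points.
split; first by move=> x y z; exact: inverse_kahan_singular_points.
split; first by move=> x y z; exact: pencil_base_points.
by split; first exact: base_points_uniq.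
Qed.
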